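(* Let $\varepsilon\in(0,2)$. For all sufficiently large $n$ (depending on $\varepsilon$) there exists an approximately convex set $A\subseteq\ell_1^n$ such that $$\mathcal{H}(A,\operatorname{Co}(A))\ge\log_2 n-\varepsilon\qquad\text{and}\qquad\operatorname{diam}(A)\le\Bigl(\frac{8}{\varepsilon}+1\Bigr)\log_2 n.$$
   Context: $\ell_1^n$ is $\mathbb{R}^n$ with the norm $\sum|a_i|$. A set $A$ is approximately convex if $d(tx+(1-t)y,A)\le1$ for all $x,y\in A$, $t\in[0,1]$, where $d(x,A)=\inf_{a\in A}\|x-a\|$. $\mathcal{H}$ is the Hausdorff distance, $\operatorname{Co}$ the convex hull, $\operatorname{diam}(A)=\sup\{\|x-y\|:x,y\in A\}$. *)

From HB Require Import structures.
From mathcomp Require Import all_boot all_order all_algebra.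
From mathcomp Require Import all_classical all_reals all_analysis.
Set Implicit Arguments. Unset Strict Implicit. Unset Printing Implicit Defensive.
Import Order.TTheory GRing.Theory Num.Theory.
Local Open Scope classical_set_scope.
Local Open Scope ring_scope.

Section Defs.
Variables (R : realType) (n : nat).
Local Notation V := 'rV[R]_n.

Definition norm1 (x : V) : R := \sum_(i < n) `|x ord0 i|.

(* d(x,A) = inf_{a in A} ||x - a||_1, in extended reals (+oo if A empty) *)
Definition dist1 (x : V) (A : set V) : \bar R :=
  ereal_inf [set (norm1 (x - a))%:E | a in A].

Definition approx_convex (A : set V) : Prop :=
  forall x y t, A x -> A y -> 0 <= t <= 1 ->
    (dist1 (t *: x + (1 - t) *: y) A <= 1%:E)%E.

Definition conv_hull (A : set V) : set V :=
  [set x | exists m (w : 'I_m -> R) (p : 'I_m -> V),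
     (forall i, 0 <= w i) /\ \sum_(i < m) w i = 1 /\
     (forall i, A (p i)) /\ x = \sum_(i < m) w i *: p i].

Definition hausdorff1 (A B : set V) : \bar R :=
  Order.max (ereal_sup [set dist1 a B | a in A])
            (ereal_sup [set dist1 b A | b in B]).

Definition diam1 (A : set V) : \bar R :=
  ereal_sup [set e | exists x y, A x /\ A y /\ e = (norm1 (x - y))%:E].

End Defs.

Definition log2 {R : realType} (x : R) : R := ln x / ln 2.

(* Let H(x) be the binary entropy of x / |x|_1 for x >= 0, and take
   A = {x >= 0 : |x|_1 + H(x) <= K} with K = (1 + 2/eps) log2 n + 2.
   Mixing two points raises |x| + H(x) by at most 1 (mixing adds at most one
   bit of entropy, and the bound H(x) <= K - |x| is concave in |x|), while
   shrinking a point towards 0 lowers |x| + H(x) by exactly the mass lost;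
   hence A is approximately convex.  The centre (K/n, ..., K/n) of the
   simplex spanned by the points K e_i of A lies in Co(A), but a point of A
   close to it would carry a mass near K spread almost uniformly, hence an
   entropy near log2 n, which |x| + H(x) <= K forbids.  Finally
   diam(A) <= 2K. *)
From HB Require Import structures.
From mathcomp Require Import all_boot all_order all_algebra.
From mathcomp Require Import all_classical all_reals all_analysis.
From mathcomp Require Import ring lra.
Set Implicit Arguments. Unset Strict Implicit. Unset Printing Implicit Defensive.
Import Order.TTheory GRing.Theory Num.Theory.
Local Open Scope classical_set_scope.
Local Open Scope ring_scope.

Section RealFacts.
Variable R : realType.

Lemma ln2_gt0 : 0 < ln (2 : R).
Proof. by apply: ln_gt0; rewrite ltr1n. Qed.

Lemma ln_le_sub1 (z : R) : 0 < z -> ln z <= z - 1.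
Proof.
move=> z0; have := @le_ln1Dx R (z - 1).
by rewrite addrCA subrr addr0; apply; rewrite ltrBrDl; lra.
Qed.

Lemma ln2_ge_half : 1 / 2 <= ln (2 : R).
Proof.
have := @ln_le_sub1 2^-1; rewrite lnV ?posrE // invr_gt0 => h.
have : (0 : R) < 2 by rewrite ltr0n.
by move/h; lra.
Qed.

Lemma log2_ge_expn (k m : nat) : (2 ^ k <= m)%N -> k%:R <= log2 (m%:R : R).
Proof.
move=> km; have l2 := ln2_gt0.
rewrite /log2 ler_pdivlMr // mulr_natl -lnXn // ler_ln ?posrE ?exprn_gt0 //.
  by rewrite -natrX ler_nat.
by rewrite ltr0n (leq_trans _ km) // expn_gt0.
Qed.

Lemma binary_entropy_le (A B : R) : 0 <= A -> 0 <= B ->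
  A * ln ((A + B) / A) + B * ln ((A + B) / B) <= (A + B) * ln 2.
Proof.
move=> A0 B0; have l2 := ln2_gt0.
have [->|An0] := eqVneq A 0.
  rewrite mul0r !add0r; have [->|Bn0] := eqVneq B 0; first by rewrite !mul0r.
  by rewrite divff // ln1 mulr0 mulr_ge0 // ltW.
have [->|Bn0] := eqVneq B 0.
  by rewrite mul0r !addr0 divff // ln1 mulr0 mulr_ge0 // ltW.
have Ap : 0 < A by rewrite lt_def An0 A0.
have Bp : 0 < B by rewrite lt_def Bn0 B0.
(* ln ((U + V) / U) = ln 2 + ln ((U + V) / (2 U)) and ln z <= z - 1 *)
have half_bound (U V : R) : 0 < U -> 0 < V ->
    U * ln ((U + V) / U) <= U * ln 2 + (U + V) / 2 - U.
  move=> Up Vp; have pos : 0 < (U + V) / (2 * U) by rewrite divr_gt0 ?mulr_gt0 //; lra.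
  have -> : (U + V) / U = 2 * ((U + V) / (2 * U)) by field; rewrite gt_eqF.
  rewrite lnM ?posrE // mulrDr -addrA lerD2l.
  have -> : (U + V) / 2 - U = U * ((U + V) / (2 * U) - 1) by field; rewrite gt_eqF.
  by rewrite ler_pM2l // ln_le_sub1.
have := half_bound A B Ap Bp; have := half_bound B A Bp Ap; rewrite (addrC B A).
by lra.
Qed.

Lemma mul_ln_ratio_le (u v U M : R) : 0 <= u -> 0 <= v -> u <= U -> U <= M ->
  u * ln (M / (u + v)) <= u * ln (U / u) + u * ln (M / U).
Proof.
move=> u0 v0 uU UM; have [->|un0] := eqVneq u 0; first by rewrite !mul0r addr0.
have up : 0 < u by rewrite lt_def un0 u0.
have Up : 0 < U by apply: lt_le_trans uU.
have Mp : 0 < M by apply: lt_le_trans UM.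
rewrite -mulrDr ler_pM2l // -lnM ?posrE ?divr_gt0 //.
have -> : U / u * (M / U) = M / u by field; rewrite !gt_eqF.
rewrite ler_ln ?posrE ?divr_gt0 ?ler_pM2l ?lef_pV2 ?posrE ?lerDl //; lra.
Qed.

(* The excess [x - c] of a coordinate over the level [c] is charged at rate
   [ln N + 1], using [ln (x / c) <= ln N] and [ln (x / c) <= x / c - 1]. *)
Lemma mul_ln_excess_le (x m c N : R) : 0 <= x -> x <= m -> 0 < c -> m <= c * N ->
  1 <= N -> x * ln (m / c) - (ln N + 1) * Num.max (x - c) 0 <= x * ln (m / x).
Proof.
move=> x0 xm c0 mcN N1; have lN : 0 <= ln N by apply: ln_ge0.
have [->|xn0] := eqVneq x 0.
  by rewrite !mul0r sub0r max_r ?mulr0 ?subr0 // sub0r oppr_le0 ltW.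
have xp : 0 < x by rewrite lt_def xn0 x0.
have mp : 0 < m by apply: lt_le_trans xm.
have -> : ln (m / c) = ln (m / x) + ln (x / c).
  by rewrite -lnM ?posrE ?divr_gt0 //; congr ln; field; rewrite !gt_eqF.
rewrite mulrDr lerBlDr lerD2l.
have [xc|cx] := leP x c.
  by rewrite max_r ?subr_le0 // mulr0 pmulr_rle0 // ln_le0 // ler_pdivrMr ?mul1r.
rewrite max_l; last by rewrite subr_ge0 ltW.
have lxN : ln (x / c) <= ln N.
  rewrite ler_ln ?posrE ?divr_gt0 ?(lt_le_trans ltr01 N1) //.
  by rewrite ler_pdivrMr // mulrC; apply: le_trans xm mcN.
have lxc : c * ln (x / c) <= x - c.
  have -> : x - c = c * (x / c - 1) by field; rewrite gt_eqF.
  by rewrite ler_pM2l // ln_le_sub1 // divr_gt0.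
have -> : x * ln (x / c) = (x - c) * ln (x / c) + c * ln (x / c) by rewrite -mulrDl subrK.
rewrite (mulrDl (ln N)) mul1r (mulrC (ln N)); apply: lerD => //.
by rewrite ler_pM2l ?subr_gt0.
Qed.

(* With [d = K - m] the mass deficit and [P] the excess: if [d < L - eps] then
   [eps m >= 2 (L + eps)], and comparing the two bounds on [E] gives
   [(L - d) m l2 <= d + 2 m l2 P]. *)
Lemma deficit_add_excess_ge (l2 eps L K m P E : R) : 1 / 2 <= l2 -> 0 < eps < 2 ->
  0 <= L -> K = L * (1 + 2 / eps) + 2 -> 0 < m -> m <= K -> 0 <= P ->
  E <= (K - m) * m * l2 -> m * (L * l2) - (K - m) - (L * l2 + 1) * P <= E ->
  L - eps <= (K - m) + 2 * P.
Proof.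
move=> l2h /andP[e0 e2] L0 hK m0 mK P0 E1 E2.
have [|dlt] := leP (L - eps) (K - m); first by lra.
have em : 2 * L + 2 * eps <= eps * m.
  have : eps * K = eps * L + 2 * L + 2 * eps by rewrite hK; field; rewrite gt_eqF.
  have : eps * (K - m) <= eps * (L - eps) by rewrite ler_pM2l // ltW.
  nra.
move: E1 E2 dlt; set d := K - m => E1 E2 dlt.
have mL : L + 2 <= m by nra.
have A1 : L <= eps * m * l2 by nra.
have A2 : (L * l2 + 1) * P <= 2 * m * l2 * P by apply: ler_wpM2r => //; nra.
have A4 : (L - eps) * (m * l2) <= (d + 2 * P) * (m * l2) by nra.
by rewrite -(ler_pM2r (_ : 0 < m * l2)) //; nra.
Qed.

Lemma double_radius_le (eps L : R) : 0 < eps < 2 -> 4 <= L ->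
  2 * (L * (1 + 2 / eps) + 2) <= (8 / eps + 1) * L.
Proof.
move=> /andP[e0 e2] L4; set u := L / eps.
have -> : L * (1 + 2 / eps) = L + 2 * u by rewrite /u; field; rewrite gt_eqF.
have -> : (8 / eps + 1) * L = 8 * u + L by rewrite /u; field; rewrite gt_eqF.
have : eps * u = L by rewrite /u mulrC divfK // gt_eqF.
nra.
Qed.

End RealFacts.

Section HausdorffDiameter.
Variables (R : realType) (n : nat).
Implicit Types (A B : set 'rV[R]_n).

Lemma hausdorff1_ge A B b (r : R) : B b -> (forall a, A a -> r <= norm1 (b - a)) ->
  (r%:E <= hausdorff1 A B)%E.
Proof.
move=> Bb far; rewrite /hausdorff1 le_max; apply/orP; right.
apply: le_ereal_sup_tmp; exists (dist1 b A); first by exists b.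
by apply: le_ereal_inf_tmp => _ [a Aa <-]; rewrite lee_fin far.
Qed.

Lemma diam1_le A (D : R) : (forall x y, A x -> A y -> norm1 (x - y) <= D) ->
  (diam1 A <= D%:E)%E.
Proof. by move=> AD; apply: ge_ereal_sup => _ [x [y [Ax [Ay ->]]]]; rewrite lee_fin AD. Qed.

End HausdorffDiameter.

Section Entropy.
Variables (R : realType) (n : nat).
Implicit Types (x y : 'I_n -> R).

(* [wentropy x = mass x * ln 2 * entropy x]; [entropy x] is the binary
   entropy of [x / mass x], with junk value [0] when [mass x = 0]. *)
Definition mass x : R := \sum_i x i.
Definition wentropy x : R := \sum_i x i * ln (mass x / x i).
Definition entropy x : R := wentropy x / (mass x * ln 2).

Lemma mass_ge0 x : (forall i, 0 <= x i) -> 0 <= mass x.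
Proof. by move=> x0; apply: sumr_ge0. Qed.

Lemma le_mass x : (forall j, 0 <= x j) -> forall i, x i <= mass x.
Proof. by move=> x0 i; rewrite /mass (bigD1 i) //= lerDl; apply: sumr_ge0. Qed.

Lemma massD x y : mass (fun i => x i + y i) = mass x + mass y.
Proof. exact: big_split. Qed.

Lemma massZ (t : R) x : mass (fun i => t * x i) = t * mass x.
Proof. by rewrite /mass mulr_sumr. Qed.

Lemma wentropy_ge0 x : (forall i, 0 <= x i) -> 0 <= wentropy x.
Proof.
move=> x0; apply: sumr_ge0 => i _; have [->|xi0] := eqVneq (x i) 0; first by rewrite mul0r.
have xp : 0 < x i by rewrite lt_def xi0 x0.
by rewrite mulr_ge0 // ln_ge0 // ler_pdivlMr // mul1r le_mass.
Qed.

Lemma entropy_ge0 x : (forall i, 0 <= x i) -> 0 <= entropy x.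
Proof.
move=> x0; rewrite divr_ge0 ?wentropy_ge0 // mulr_ge0 ?mass_ge0 //.
exact: ltW (@ln2_gt0 R).
Qed.

Lemma wentropyZ (t : R) x : 0 <= t -> wentropy (fun i => t * x i) = t * wentropy x.
Proof.
move=> t0; rewrite /wentropy massZ mulr_sumr; apply: eq_bigr => i _.
have [->|tn0] := eqVneq t 0; first by rewrite !mul0r.
by rewrite -mulf_div divff // mul1r mulrA.
Qed.

Lemma entropyZ (t : R) x : 0 < t -> entropy (fun i => t * x i) = entropy x.
Proof.
move=> t0; rewrite /entropy wentropyZ ?ltW // massZ; have l2 := @ln2_gt0 R.
have [->|m0] := eqVneq (mass x) 0; first by rewrite !(mulr0, mul0r, invr0).
by field; rewrite m0 !gt_eqF.
Qed.

Lemma wentropy_mass0 x : mass x = 0 -> wentropy x = 0.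
Proof. by move=> m0; rewrite /wentropy m0; apply: big1 => i _; rewrite mul0r ln0 ?mulr0. Qed.

Lemma wentropyD_le x y : (forall i, 0 <= x i) -> (forall i, 0 <= y i) ->
  wentropy (fun i => x i + y i) <= wentropy x + wentropy y + (mass x + mass y) * ln 2.
Proof.
move=> x0 y0; have mx0 := mass_ge0 x0; have my0 := mass_ge0 y0.
set M := mass x + mass y.
apply: (le_trans (y := wentropy x + wentropy y +
   (mass x * ln (M / mass x) + mass y * ln (M / mass y)))); last first.
  by rewrite lerD2l binary_entropy_le.
rewrite /wentropy massD -/M !mulr_suml addrACA -!big_split /=.
apply: ler_sum => i _; rewrite mulrDl.
have h1 := mul_ln_ratio_le (x0 i) (y0 i) (le_mass x0 i) (_ : mass x <= M).
have h2 := mul_ln_ratio_le (y0 i) (x0 i) (le_mass y0 i) (_ : mass y <= M).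
rewrite (addrC (y i)) in h2; apply: lerD; [apply: h1 | apply: h2]; rewrite /M; lra.
Qed.

Lemma wentropy_le_entropy x K : (forall i, 0 <= x i) -> mass x + entropy x <= K ->
  wentropy x <= (K - mass x) * mass x * ln 2.
Proof.
move=> x0 h; have l2 := @ln2_gt0 R.
have [m0|mn0] := eqVneq (mass x) 0; first by rewrite wentropy_mass0 // m0 !(mulr0, mul0r).
have mp : 0 < mass x by rewrite lt_def mn0 mass_ge0.
rewrite -[wentropy x](@divfK _ (mass x * ln 2)) ?mulf_neq0 ?gt_eqF // -/(entropy x).
by rewrite -mulrA ler_pM2r ?mulr_gt0 //; lra.
Qed.

(* Mixing costs at most one bit; the bound on [wentropy] from
   [wentropy_le_entropy] is concave in the mass. *)
Lemma mass_entropy_mix x y z (t K : R) : (forall i, 0 <= x i) -> (forall i, 0 <= y i) ->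
  0 <= t <= 1 -> mass x + entropy x <= K -> mass y + entropy y <= K ->
  (forall i, z i = t * x i + (1 - t) * y i) -> mass z + entropy z <= K + 1.
Proof.
move=> x0 y0 /andP[t0 t1] hx hy /funext->{z}; have t1' : 0 <= 1 - t by rewrite subr_ge0.
set z := fun i => _.
have l2 := @ln2_gt0 R.
have ex := wentropy_le_entropy x0 hx; have ey := wentropy_le_entropy y0 hy.
have mx0 := mass_ge0 x0; have my0 := mass_ge0 y0.
have tx0 i : 0 <= t * x i by rewrite mulr_ge0.
have ty0 i : 0 <= (1 - t) * y i by rewrite mulr_ge0.
have hz := wentropyD_le tx0 ty0; rewrite !wentropyZ // !massZ -/z in hz.
have mz : mass z = t * mass x + (1 - t) * mass y by rewrite massD !massZ.
have [M0|Mn0] := eqVneq (mass z) 0.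
  rewrite {1}/entropy M0 mul0r invr0 mulr0 add0r; have := entropy_ge0 x0; lra.
have Mp : 0 < mass z by rewrite lt_def Mn0 mass_ge0 // => i; rewrite addr_ge0.
rewrite -lerBrDl /entropy ler_pdivrMr ?mulr_gt0 // (le_trans hz) // mz.
move: Mp; rewrite mz; set mX := mass x; set mY := mass y => Mp.
have e1 : t * wentropy x <= t * ((K - mX) * mX * ln 2) by rewrite ler_wpM2l.
have e2 : (1 - t) * wentropy y <= (1 - t) * ((K - mY) * mY * ln 2) by rewrite ler_wpM2l.
have jensen : 0 <= t * (1 - t) * (mX - mY) ^+ 2 by rewrite mulr_ge0 ?sqr_ge0 ?mulr_ge0.
nra.
Qed.

Lemma sum_dist_const x (c : R) :
  \sum_i `|c - x i| = (c *+ n - mass x) + 2 * \sum_i Num.max (x i - c) 0.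
Proof.
have -> : c *+ n = \sum_(i < n) c by rewrite sumr_const card_ord.
rewrite /mass -sumrB mulr_sumr -big_split /=.
apply: eq_bigr => i _; have [h|h] := leP (x i) c.
  by rewrite max_r ?subr_le0 // mulr0 addr0 ger0_norm // subr_ge0.
by rewrite max_l ?subr_ge0 ?ltW // ler0_norm ?subr_le0 ?ltW //; lra.
Qed.

Lemma wentropy_lower x (K : R) : (0 < n)%N -> 0 < K -> (forall i, 0 <= x i) ->
  0 < mass x -> mass x <= K ->
  mass x * ln n%:R - (K - mass x)
    - (ln n%:R + 1) * \sum_i Num.max (x i - K / n%:R) 0 <= wentropy x.
Proof.
move=> n0 K0 x0 m0 mK; have np : 0 < (n%:R : R) by rewrite ltr0n.
have c0 : 0 < K / n%:R by rewrite divr_gt0.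
apply: (le_trans (y := mass x * ln (mass x / (K / n%:R))
    - (ln n%:R + 1) * \sum_i Num.max (x i - K / n%:R) 0)); last first.
  rewrite mulr_suml mulr_sumr -sumrB; apply: ler_sum => i _.
  apply: mul_ln_excess_le => //; first exact: le_mass.
    by rewrite mulrAC -mulrA divff ?gt_eqF // mulr1.
  by rewrite ler1n.
rewrite lerD2r.
have -> : mass x / (K / n%:R) = n%:R * (K / mass x)^-1 by field; rewrite !gt_eqF.
rewrite lnM ?posrE ?invr_gt0 ?divr_gt0 // lnV ?posrE ?divr_gt0 // mulrDr lerD2l.
have -> : K - mass x = mass x * (K / mass x - 1) by field; rewrite gt_eqF.
by rewrite mulrN lerN2 ler_pM2l // ln_le_sub1 // divr_gt0.
Qed.

End Entropy.

Section EntropyBody.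
Variables (R : realType) (n : nat).
Local Notation V := 'rV[R]_n.

Definition coords (v : V) : 'I_n -> R := fun i => v ord0 i.

Definition entropy_body (K : R) : set V :=
  [set v : V | (forall i, 0 <= v ord0 i) /\ mass (coords v) + entropy (coords v) <= K].

Lemma coordsZ (t : R) (v : V) : coords (t *: v) = fun i => t * coords v i.
Proof. by apply: funext => i; rewrite /coords mxE. Qed.

Lemma norm1_nonneg (v : V) : (forall i, 0 <= v ord0 i) -> norm1 v = mass (coords v).
Proof. by move=> v0; apply: eq_bigr => i _; rewrite ger0_norm. Qed.

Lemma entropy_body0 K : 0 <= K -> entropy_body K 0.
Proof.
move=> K0; split=> [i|]; first by rewrite mxE.
have m0 : mass (coords 0) = 0 by apply: big1 => i _; rewrite /coords mxE.
by rewrite /entropy m0 !mul0r invr0 mulr0 addr0.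
Qed.

(* A point with [mass + entropy <= K + 1] is within distance 1 of the body:
   either its mass is at most 1 (use [0]), or scaling it by
   [lam = (K - entropy) / mass] lowers the mass, but not the entropy, by at
   most 1. *)
Lemma dist_entropy_body_le1 K (z : V) : 0 <= K -> (forall i, 0 <= z ord0 i) ->
  mass (coords z) + entropy (coords z) <= K + 1 -> (dist1 z (entropy_body K) <= 1%:E)%E.
Proof.
move=> K0 z0 hz; have h0 := entropy_ge0 z0; have m0 := mass_ge0 z0.
apply: ge_ereal_inf.
have [hK|hK] := leP (mass (coords z) + entropy (coords z)) K.
  exists 0%:E; last by rewrite lee_fin.
  by exists z; [split | rewrite subrr /norm1 big1 // => i _; rewrite mxE normr0].
have [hm|hm] := leP (mass (coords z)) 1.
  exists (mass (coords z))%:E; last by rewrite lee_fin.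
  by exists 0; [exact: entropy_body0 | rewrite subr0 norm1_nonneg].
set M := mass (coords z) in hK hm hz m0 *; set h := entropy (coords z) in hK hz h0 *.
have Mp : 0 < M by lra.
set lam := (K - h) / M.
have lp : 0 < lam by rewrite divr_gt0 //; lra.
have l1 : lam < 1 by rewrite ltr_pdivrMr // mul1r; lra.
exists (M - (K - h))%:E; last by rewrite lee_fin; lra.
exists (lam *: z).
  split=> [i|]; first by rewrite mxE mulr_ge0 // ltW.
  by rewrite coordsZ massZ entropyZ // -/M -/h /lam divfK ?gt_eqF //; lra.
have -> : z - lam *: z = (1 - lam) *: z by rewrite scalerBl scale1r.
rewrite norm1_nonneg => [|i]; last by rewrite mxE mulr_ge0 // subr_ge0 ltW.
by rewrite coordsZ massZ -/M /lam mulrBl mul1r divfK ?gt_eqF.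
Qed.

Lemma entropy_body_approx_convex K : 0 <= K -> approx_convex (entropy_body K).
Proof.
move=> K0 x y t [x0 hx] [y0 hy] t01; have /andP[t0 t1] := t01.
have z0 i : 0 <= (t *: x + (1 - t) *: y) ord0 i.
  by rewrite !mxE addr_ge0 ?mulr_ge0 ?subr_ge0.
apply: dist_entropy_body_le1 => //; apply: (mass_entropy_mix x0 y0 t01 hx hy).
by move=> i; rewrite /coords !mxE.
Qed.

Definition corner (K : R) (i : 'I_n) : V := \row_j (if j == i then K else 0).
Definition center (K : R) : V := \sum_(i < n) n%:R^-1 *: corner K i.

Lemma corner_in_entropy_body K i : 0 <= K -> entropy_body K (corner K i).
Proof.
move=> K0; split=> [j|]; first by rewrite mxE; case: (j == i).
have cK : coords (corner K i) = fun j => if j == i then K else 0.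
  by apply: funext => j; rewrite /coords mxE.
have mK : mass (coords (corner K i)) = K.
  by rewrite cK /mass (bigD1 i) //= eqxx big1 ?addr0 // => j /negbTE ->.
rewrite /entropy mK; suff -> : wentropy (coords (corner K i)) = 0 by rewrite mul0r addr0.
rewrite /wentropy mK cK; apply: big1 => j _; case: (j == i); last by rewrite mul0r.
by have [->|Kn0] := eqVneq K 0; rewrite ?mul0r // divff // ln1 mulr0.
Qed.

Lemma centerE K (j : 'I_n) : center K ord0 j = K / n%:R.
Proof.
rewrite /center summxE (bigD1 j) //= big1 ?addr0; first by rewrite !mxE eqxx mulrC.
by move=> i /negbTE ij; rewrite !mxE eq_sym ij mulr0.
Qed.

Lemma center_in_hull K : (0 < n)%N -> 0 <= K -> conv_hull (entropy_body K) (center K).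
Proof.
move=> n0 K0; exists n, (fun=> n%:R^-1), (corner K).
split=> [i|]; first by rewrite invr_ge0 ler0n.
split; first by rewrite sumr_const card_ord -[RHS](@mulVf _ n%:R) ?mulr_natr // pnatr_eq0 -lt0n.
by split=> // i; apply: corner_in_entropy_body.
Qed.

Lemma norm1_sub_le_mass (a b : V) : (forall i, 0 <= a ord0 i) -> (forall i, 0 <= b ord0 i) ->
  norm1 (a - b) <= mass (coords a) + mass (coords b).
Proof.
move=> a0 b0; rewrite /mass -big_split; apply: ler_sum => i _; rewrite !mxE.
by have := a0 i; have := b0 i; rewrite ler_norml /coords /= => ? ?; apply/andP; split; lra.
Qed.

Lemma entropy_body_dist_le K a b : entropy_body K a -> entropy_body K b ->
  norm1 (a - b) <= 2 * K.
Proof.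
move=> [a0 ha] [b0 hb]; have := entropy_ge0 a0; have := entropy_ge0 b0.
by have := norm1_sub_le_mass a0 b0; lra.
Qed.

Lemma center_far (eps K : R) (a : V) : 0 < eps < 2 -> (0 < n)%N ->
  K = log2 (n%:R : R) * (1 + 2 / eps) + 2 -> entropy_body K a ->
  log2 (n%:R : R) - eps <= norm1 (center K - a).
Proof.
move=> eps02 n0 hK [a0 ha]; have /andP[e0 e2] := eps02.
set L := log2 (n%:R : R) in hK *; have l2 := ln2_gt0 R.
have L0 : 0 <= L by rewrite divr_ge0 ?ln_ge0 ?ler1n // ltW.
have K0 : 0 < K by rewrite hK ltr_wpDl // mulr_ge0 // addr_ge0 // divr_ge0 // ltW.
have np : 0 < (n%:R : R) by rewrite ltr0n.
have -> : norm1 (center K - a) = \sum_i `|K / n%:R - coords a i|.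
  by apply: eq_bigr => i _; rewrite !mxE centerE.
rewrite sum_dist_const.
have -> : K / n%:R *+ n = K by rewrite -mulr_natr divfK // gt_eqF.
have P0 : 0 <= \sum_i Num.max (coords a i - K / n%:R) 0.
  by apply: sumr_ge0 => i _; rewrite le_max lexx orbT.
have h0 := entropy_ge0 a0; have m0 := mass_ge0 a0.
have [M0|Mn0] := eqVneq (mass (coords a)) 0.
  have : 0 <= L * (2 / eps) by rewrite mulr_ge0 // divr_ge0 // ltW.
  have : K = L + L * (2 / eps) + 2 by rewrite hK mulrDr mulr1.
  by rewrite M0 subr0; lra.
have mp : 0 < mass (coords a) by rewrite lt_def Mn0 m0.
apply: (deficit_add_excess_ge (ln2_ge_half R) eps02 L0 hK mp _ P0
  (wentropy_le_entropy a0 ha)); first by lra.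
have -> : L * ln 2 = ln n%:R by rewrite /L /log2 divfK ?gt_eqF.
by apply: (@wentropy_lower _ _ (coords a)) => //; lra.
Qed.

End EntropyBody.

Theorem proposition4p3 (R : realType) (eps : R) (heps : 0 < eps < 2) :
  exists N : nat, forall n : nat, (N <= n)%N ->
    exists A : set 'rV[R]_n,
      approx_convex A /\
      (((log2 (n%:R : R) - eps)%:E <= hausdorff1 A (conv_hull A))%E) /\
      ((diam1 A <= ((8 / eps + 1) * log2 (n%:R : R))%:E)%E).
Proof.
exists (2 ^ 4)%N => n n16; have n0 : (0 < n)%N by apply: leq_trans n16.
have L4 : 4 <= log2 (n%:R : R) by apply: log2_ge_expn.
set K := log2 (n%:R : R) * (1 + 2 / eps) + 2.
have K0 : 0 <= K.
  have /andP[e0 _] := heps; have : 0 <= 2 / eps by rewrite divr_ge0 // ltW.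
  by rewrite /K; nra.
exists (entropy_body K); split; first exact: entropy_body_approx_convex.
split.
  apply: (hausdorff1_ge (center_in_hull n0 K0)) => a; exact: center_far.
apply: diam1_le => x y Ax Ay; apply: le_trans (entropy_body_dist_le Ax Ay) _.
exact: double_radius_le.
Qed.
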